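(* Let $G$ be an infinite isoradial graph, $G^F$ its Fisher graph equipped with an admissible orientation, and consider the rhombus angles $\bar\alpha_j(\bar x)$, $\bar x\in V$, $j\in\{1,\dots,d(\bar x)\}$, propagated by the rules (R1)–(R3) below. Then these rules are consistent: the angles $\bar\alpha_j(\bar x)$ are well defined as elements of $\mathbb R/4\pi\mathbb Z$, i.e. the value obtained for each $\bar\alpha_j(\bar x)$ does not depend on the sequence of rules used to reach it (in particular, going around the inner cycle of a decoration, or around a cycle of $G^F$ surrounding a face of $G$, returns the initial angle modulo $4\pi$).
   Context: Isoradial graph: $G=(V,E)$ is an infinite, locally finite planar graph embedded so that every face is inscribed in a circle of radius $1$ whose center lies in the interior of the face. The diamond graph $G^\diamond$ has as vertices $V$ together with these circumcenters, each circumcenter joined to the vertices on the boundary of its face; its faces are rhombi of side $1$, and every edge $e$ of $G$ is a diagonal of exactly one rhombus. Fisher graph: $G^F$ is obtained from $G$ by replacing each vertex $\bar x$ of degree $d=d(\bar x)$ by a decoration with $2d$ vertices $w_1(\bar x),\dots,w_d(\bar x),v_1(\bar x),\dots,v_d(\bar x)$ (indices mod $d$): the $w_j(\bar x)$ form a cycle (the inner cycle), in counterclockwise order, and $v_j(\bar x)$ is joined to $w_j(\bar x)$ and $w_{j+1}(\bar x)$ (the $j$-th triangle). The edges of $G$ at $\bar x$, in counterclockwise order, correspond to $v_1(\bar x),\dots,v_d(\bar x)$, and an edge $\bar x\bar y$ of $G$ yields an edge $v_j(\bar x)v_\ell(\bar y)$ of $G^F$ between the corresponding vertices. An orientation of the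 edges of $G^F$ is admissible if the boundary cycle of every face, traversed clockwise, contains an odd number of edges oriented in the direction of traversal. For a directed path $\gamma$ in $G^F$, $\mathrm{co}(\gamma)$ is the number of its edges whose orientation agrees with the direction of $\gamma$. Rhombus angles: for $\bar x\in V$ of degree $d$, the $d$ edges of $G^\diamond$ at $\bar x$ have unit directions $e^{i\bar\alpha_1(\bar x)},\dots,e^{i\bar\alpha_d(\bar x)}$ in counterclockwise order, labelled so that the edge of $G$ corresponding to $v_j(\bar x)$ is the diagonal of the rhombus whose sides at $\bar x$ are $e^{i\bar\alpha_j(\bar x)}$ and $e^{i\bar\alpha_{j+1}(\bar x)}$; $\bar\theta_j(\bar x)\in(0,\pi/2)$ is the half-angle of that rhombus at $\bar x$. The real lifts of these angles are defined by: (R1) fix a vertex $\bar x_0$ and set $\bar\alpha_1(\bar x_0)=0$; (R2) inside a decoration, $\bar\alpha_{j+1}(\bar x)=\bar\alpha_j(\bar x)+2\bar\theta_j(\bar x)$ if the edge between $w_j(\bar x)$ and $w_{j+1}(\bar x)$ is oriented $w_j\to w_{j+1}$, and $\bar\alpha_{j+1}(\bar x)=\bar\alpha_j(\bar x)+2\bar\theta_j(\bar x)+2\pi$ otherwise; (R3) if $v_j(\bar x)$ is adjacent to $v_\ell(\bar y)$, then $\bar\alpha_\ell(\bar y)=\bar\alpha_j(\bar x)-\pi$ if $\mathrm{co}(w_j(\bar x),v_j(\bar x),v_\ell(\bar y),w_\ell(\bar y))$ is odd and $\bar\alpha_\ell(\bar y)=\bar\alpha_j(\bar x)+\pi$ if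 it is even. *)

From Stdlib Require Import Reals List Arith Relations.
Import ListNotations.
Open Scope R_scope.

(* Combinatorial model of the plane graph G (a combinatorial map).      *)
(* D : darts (= half-edges).  A dart d at vertex x corresponds to the  *)
(* Fisher vertex v_j(x) (the j-th edge of G at x).                     *)
(*   sig d : next dart counterclockwise around the same vertex         *)
(*           (v_j(x) |-> v_(j+1)(x)).                                  *)
(*   iota d : the opposite dart of the same edge (v_j(x) <-> v_l(y)).  *)
(* Vertices of G = sig-orbits; edges = iota-orbits.                    *)

Fixpoint traj {D : Type} (f : D -> D) (d : D) (n : nat) : list D :=
  match n with
  | O => []
  | S m => d :: traj f (f d) m
  end.

Definition is_period {D : Type} (f : D -> D) (d : D) (n : nat) : Prop :=
  (0 < n)%nat /\ Nat.iter n f d = d /\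
  (forall m, (0 < m)%nat -> (m < n)%nat -> Nat.iter m f d <> d).

(* corner map: the corner (d, sig d) at x is followed, along the face of G
   lying between d and sig d (traversed clockwise), by the corner
   (iota (sig d), sig (iota (sig d))) at the next vertex. *)
Definition corner_next {D : Type} (sig iota : D -> D) (d : D) : D :=
  iota (sig d).

(* successor of a dart along the clockwise boundary walk of a face *)
Definition face_next {D : Type} (sig iota : D -> D) (e : D) : D :=
  sig (iota e).

Definition same_vertex {D : Type} (sig : D -> D) (d e : D) : Prop :=
  exists n, Nat.iter n sig d = e.

Fixpoint walk_chain {D : Type} (sig iota : D -> D) (l : list D) : Prop :=
  match l with
  | d :: ((e :: _) as t) => same_vertex sig (iota d) e /\ walk_chain sig iota t
  | _ => True
  end.

Definition closed_walk {D : Type} (sig iota : D -> D) (l : list D) : Prop :=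
  walk_chain sig iota l /\
  match l with
  | [] => True
  | d :: _ => same_vertex sig (iota (last l d)) d
  end.

Inductive hstep {D : Type} (sig iota : D -> D) : list D -> list D -> Prop :=
  | hs_back l1 l2 d : hstep sig iota (l1 ++ d :: iota d :: l2) (l1 ++ l2)
  | hs_face l1 l2 e k : is_period (face_next sig iota) e k ->
      hstep sig iota (l1 ++ traj (face_next sig iota) e k ++ l2) (l1 ++ l2).

Definition homotopic {D : Type} (sig iota : D -> D) : list D -> list D -> Prop :=
  clos_refl_sym_trans (list D) (hstep sig iota).

(* G is an infinite, connected, locally finite graph, cellularly embedded
   in the plane with finite faces (the 2-complex is simply connected and
   non-compact, hence the plane). *)
Definition plane_map {D : Type} (sig iota : D -> D) : Prop :=
  (forall d, iota (iota d) = d) /\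
  (forall d, iota d <> d) /\
  (forall d, exists n, is_period sig d n) /\                       (* locally finite *)
  (forall d, exists k, is_period (corner_next sig iota) d k) /\    (* finite faces *)
  (forall d e, clos_refl_trans D (fun a b => b = sig a \/ b = iota a) d e) /\
  (~ exists l : list D, forall d, In d l) /\
  (forall l, closed_walk sig iota l -> homotopic sig iota l []).   (* planar *)

Fixpoint sumR {D : Type} (f : D -> R) (l : list D) : R :=
  match l with
  | [] => 0
  | d :: t => f d + sumR f t
  end.

(* Isoradial rhombus data: th d = half-angle at x of the rhombus of G^diamond
   whose diagonal is the edge of d (the angle bar-theta_j(x)). *)
Definition isoradial_angles {D : Type} (sig iota : D -> D) (th : D -> R) : Prop :=
  (forall d, 0 < th d < PI / 2) /\
  (forall d, th (iota d) = th d) /\        (* same rhombus, opposite vertex *)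
  (forall d n, is_period sig d n ->         (* rhombi around a vertex *)
      sumR (fun e => 2 * th e) (traj sig d n) = 2 * PI) /\
  (forall d k, is_period (corner_next sig iota) d k ->  (* rhombi around a circumcenter *)
      sumR (fun e => PI - 2 * th (sig e)) (traj (corner_next sig iota) d k) = 2 * PI).

(* Fisher graph.  W d = w_j(x), V d = v_j(x) when d is the j-th dart at x. *)
Inductive FV (D : Type) : Type :=
  | W : D -> FV D
  | V : D -> FV D.
Arguments W {D} _.
Arguments V {D} _.

Definition fisher_edge0 {D : Type} (sig iota : D -> D) (a b : FV D) : Prop :=
  exists d,
    (a = W d /\ b = W (sig d)) \/     (* inner cycle edge w_j w_(j+1) *)
    (a = V d /\ b = W d) \/           (* triangle edge v_j w_j *)
    (a = V d /\ b = W (sig d)) \/     (* triangle edge v_j w_(j+1) *)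
    (a = V d /\ b = V (iota d)).      (* edge coming from G *)

Definition fisher_adj {D : Type} (sig iota : D -> D) (a b : FV D) : Prop :=
  fisher_edge0 sig iota a b \/ fisher_edge0 sig iota b a.

(* o a b = true : the Fisher edge {a,b} is oriented a -> b *)
Definition orientation {D : Type} (sig iota : D -> D) (o : FV D -> FV D -> bool) : Prop :=
  (forall a b, o a b = true -> fisher_adj sig iota a b) /\
  (forall a b, fisher_adj sig iota a b -> o a b <> o b a).

Fixpoint co_path {D : Type} (o : FV D -> FV D -> bool) (l : list (FV D)) : nat :=
  match l with
  | a :: ((b :: _) as t) => ((if o a b then 1 else 0) + co_path o t)%nat
  | _ => O
  end.

Definition co_cycle {D : Type} (o : FV D -> FV D -> bool) (l : list (FV D)) : nat :=
  match l with
  | [] => O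
  | a :: _ => co_path o (l ++ [a])
  end.

(* Boundary cycles of the faces of G^F, each traversed clockwise. *)
(* inner face of the decoration of the vertex of d (n = degree): clockwise
   means w_(j+1) -> w_j *)
Definition inner_face_cw {D : Type} (sig : D -> D) (d : D) (n : nat) : list (FV D) :=
  rev (map W (traj sig d n)).
(* j-th triangle, clockwise: w_j -> w_(j+1) -> v_j *)
Definition triangle_cw {D : Type} (sig : D -> D) (d : D) : list (FV D) :=
  [W d; W (sig d); V d].
(* face of G^F corresponding to a face of G (k corners): clockwise,
   ... -> v_j(x) -> w_(j+1)(x) -> v_(j+1)(x) -> v_l(y) -> ... *)
Definition big_face_cw {D : Type} (sig iota : D -> D) (d : D) (k : nat) : list (FV D) :=
  flat_map (fun c => [V c; W (sig c); V (sig c)]) (traj (corner_next sig iota) d k).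

Definition admissible {D : Type} (sig iota : D -> D) (o : FV D -> FV D -> bool) : Prop :=
  orientation sig iota o /\
  (forall d n, is_period sig d n -> Nat.odd (co_cycle o (inner_face_cw sig d n)) = true) /\
  (forall d, Nat.odd (co_cycle o (triangle_cw sig d)) = true) /\
  (forall d k, is_period (corner_next sig iota) d k ->
       Nat.odd (co_cycle o (big_face_cw sig iota d k)) = true).

(* Rules (R2), (R3) as increments of the lifted angle alpha(d).        *)
(* alpha(d) = bar-alpha_j(x) when d is the j-th dart at x.             *)
Definition incR2 {D : Type} (sig : D -> D) (th : D -> R) (o : FV D -> FV D -> bool)
  (d : D) : R :=
  2 * th d + (if o (W d) (W (sig d)) then 0 else 2 * PI).

Definition incR3 {D : Type} (iota : D -> D) (o : FV D -> FV D -> bool) (d : D) : R :=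
  if Nat.odd (co_path o [W d; V d; V (iota d); W (iota d)]) then - PI else PI.

(* rule_walk d e s : starting from the value a at d, some finite sequence of
   applications of the rules (R2) (in either direction) and (R3) produces the
   value a + s at e. *)
Inductive rule_walk {D : Type} (sig iota : D -> D) (th : D -> R)
    (o : FV D -> FV D -> bool) : D -> D -> R -> Prop :=
  | rw_nil d : rule_walk sig iota th o d d 0
  | rw_R2 d e s : rule_walk sig iota th o (sig d) e s ->
                  rule_walk sig iota th o d e (incR2 sig th o d + s)
  | rw_R2inv d e s : rule_walk sig iota th o d e s ->
                  rule_walk sig iota th o (sig d) e (s - incR2 sig th o d)
  | rw_R3 d e s : rule_walk sig iota th o (iota d) e s ->
                  rule_walk sig iota th o d e (incR3 iota o d + s).

(* Rule (R2) turns around a vertex of G.  A full turn adds 2 PI from the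
   rhombus angles plus 2 PI for each inner-cycle edge oriented clockwise, and
   the inner face of the decoration makes their number odd: a full turn is
   0 mod 4 PI.  Hence (R2) has a potential P on darts, and after subtracting it
   a rule walk is, mod 4 PI, the sum along a walk of G of an antisymmetric
   cochain carried by (R3).  Around a face of G with k corners this cochain
   sums to 4 k PI - 2 PI - 2 PI N, where N counts 2 PI corrections at the
   corners; the parity conditions on the triangles and on the big face make N
   odd.  Planarity writes every closed walk as a product of backtracks and face
   boundaries, so two rule walks with the same ends agree mod 4 PI. *)

From Stdlib Require Import Reals List Arith Lia Lra.
From Stdlib Require Import ClassicalEpsilon FunctionalExtensionality PropExtensionality.
Import ListNotations.
Open Scope R_scope.

Definition cong4PI (x y : R) : Prop := exists z : Z, x - y = 4 * PI * IZR z.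

Lemma cong4PI_eq x y : x = y -> cong4PI x y.
Proof. intros ->. exists 0%Z. simpl. ring. Qed.

Lemma cong4PI_refl x : cong4PI x x.
Proof. now apply cong4PI_eq. Qed.

Lemma cong4PI_sym x y : cong4PI x y -> cong4PI y x.
Proof. intros [z H]. exists (- z)%Z. rewrite opp_IZR. lra. Qed.

Lemma cong4PI_trans x y w : cong4PI x y -> cong4PI y w -> cong4PI x w.
Proof. intros [z H] [z' H']. exists (z + z')%Z. rewrite plus_IZR. lra. Qed.

Lemma cong4PI_add x y x' y' : cong4PI x y -> cong4PI x' y' -> cong4PI (x + x') (y + y').
Proof. intros [z H] [z' H']. exists (z + z')%Z. rewrite plus_IZR. lra. Qed.

Lemma sumR_cong4PI {A : Type} (F G : A -> R) l :
  (forall x, cong4PI (F x) (G x)) -> cong4PI (sumR F l) (sumR G l).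
Proof.
  intros H; induction l; simpl; [apply cong4PI_refl | now apply cong4PI_add].
Qed.

Fixpoint sumN {A : Type} (F : A -> nat) (l : list A) : nat :=
  match l with [] => 0%nat | x :: t => (F x + sumN F t)%nat end.

Section ListSums.
Context {A : Type}.
Implicit Types (F G : A -> R) (M N : A -> nat) (l : list A).

Lemma sumR_app F l1 l2 : sumR F (l1 ++ l2) = sumR F l1 + sumR F l2.
Proof. induction l1; simpl; [ring | rewrite IHl1; ring]. Qed.

Lemma sumN_app N l1 l2 : sumN N (l1 ++ l2) = (sumN N l1 + sumN N l2)%nat.
Proof. induction l1; simpl; [lia | rewrite IHl1; lia]. Qed.

Lemma sumR_ext F G l : (forall x, F x = G x) -> sumR F l = sumR G l.
Proof. intros H; induction l; simpl; [ring | rewrite H, IHl; ring]. Qed.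

Lemma sumN_ext M N l : (forall x, M x = N x) -> sumN M l = sumN N l.
Proof. intros H; induction l; simpl; [lia | rewrite H, IHl; lia]. Qed.

Lemma sumR_plus F G l : sumR (fun x => F x + G x) l = sumR F l + sumR G l.
Proof. induction l; simpl; [ring | rewrite IHl; ring]. Qed.

Lemma sumN_plus M N l : sumN (fun x => M x + N x)%nat l = (sumN M l + sumN N l)%nat.
Proof. induction l; simpl; [lia | rewrite IHl; lia]. Qed.

Lemma sumR_minus F G l : sumR (fun x => F x - G x) l = sumR F l - sumR G l.
Proof. induction l; simpl; [ring | rewrite IHl; ring]. Qed.

Lemma sumR_scal c F l : sumR (fun x => c * F x) l = c * sumR F l.
Proof. induction l; simpl; [ring | rewrite IHl; ring]. Qed.

Lemma sumR_const c l : sumR (fun _ => c) l = INR (length l) * c.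
Proof. induction l; cbn [sumR length]; [simpl; ring | rewrite S_INR, IHl; ring]. Qed.

Lemma sumR_INR N l : sumR (fun x => INR (N x)) l = INR (sumN N l).
Proof. induction l; simpl; [reflexivity | rewrite IHl, plus_INR; ring]. Qed.

Lemma sumR_map F (h : A -> A) l : sumR F (map h l) = sumR (fun x => F (h x)) l.
Proof. induction l; simpl; [ring | rewrite IHl; ring]. Qed.

Lemma sumN_map N (h : A -> A) l : sumN N (map h l) = sumN (fun x => N (h x)) l.
Proof. induction l; simpl; [lia | rewrite IHl; lia]. Qed.

Lemma sumR_rev F l : sumR F (rev l) = sumR F l.
Proof. induction l; simpl; [ring | rewrite sumR_app, IHl; simpl; ring]. Qed.

Lemma sumN_even N l : (forall x, Nat.even (N x) = true) -> exists m, sumN N l = (2 * m)%nat.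
Proof.
  intros H. induction l as [|x l [m Hm]]; [now exists 0%nat|].
  destruct (proj1 (Nat.even_spec _) (H x)) as [a Ha].
  exists (a + m)%nat. simpl. lia.
Qed.

End ListSums.

Section Trajectories.
Context {A : Type}.
Implicit Types (f g h : A -> A).

Lemma traj_length f x n : length (traj f x n) = n.
Proof. revert x; induction n; intros; simpl; auto. Qed.

Lemma traj_add f x a b : traj f x (a + b) = traj f x a ++ traj f (Nat.iter a f x) b.
Proof.
  revert x; induction a; intros x; simpl; auto.
  now rewrite IHa, <- Nat.iter_succ_r.
Qed.

Lemma traj_snoc f x n : traj f x (S n) = traj f x n ++ [Nat.iter n f x].
Proof. now rewrite <- Nat.add_1_r, traj_add. Qed.

Lemma traj_cycle f x k : Nat.iter k f x = x -> x :: traj f (f x) k = traj f x k ++ [x].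
Proof. intros Hk. rewrite <- Hk at 4. apply traj_snoc. Qed.

Lemma iter_conj f g h : (forall x, h (f x) = g (h x)) ->
  forall n x, h (Nat.iter n f x) = Nat.iter n g (h x).
Proof. intros Hc n x. induction n; [reflexivity|]. rewrite !Nat.iter_succ. now rewrite Hc, IHn. Qed.

Lemma map_traj_conj f g h : (forall x, h (f x) = g (h x)) ->
  forall n x, map h (traj f x n) = traj g (h x) n.
Proof. intros Hc n. induction n; intros x; simpl; [reflexivity | now rewrite IHn, Hc]. Qed.

Lemma is_period_conj f g h x n : (forall x, h (f x) = g (h x)) ->
  (forall x y, h x = h y -> x = y) -> is_period f x n -> is_period g (h x) n.
Proof.
  intros Hc Hinj [H0 [H1 H2]]. split; [exact H0|split].
  - now rewrite <- (iter_conj f g h Hc), H1.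
  - intros m Hm0 Hm1 E. rewrite <- (iter_conj f g h Hc) in E.
    exact (H2 m Hm0 Hm1 (Hinj _ _ E)).
Qed.

Lemma iter_mul f x p q : Nat.iter p f x = x -> Nat.iter (q * p) f x = x.
Proof. intros H; induction q; [reflexivity|]. simpl. now rewrite Nat.iter_add, IHq. Qed.

Lemma sumR_traj_shift f (F : A -> R) x k :
  Nat.iter k f x = x -> sumR (fun y => F (f y)) (traj f x k) = sumR F (traj f x k).
Proof.
  intros Hk. rewrite <- sumR_map, (map_traj_conj f f f (fun _ => eq_refl)).
  assert (E := f_equal (sumR F) (traj_cycle f x k Hk)).
  rewrite sumR_app in E. simpl in E. lra.
Qed.

Lemma sumN_traj_shift f (N : A -> nat) x k :
  Nat.iter k f x = x -> sumN (fun y => N (f y)) (traj f x k) = sumN N (traj f x k).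
Proof.
  intros Hk. rewrite <- sumN_map, (map_traj_conj f f f (fun _ => eq_refl)).
  assert (E := f_equal (sumN N) (traj_cycle f x k Hk)).
  rewrite sumN_app in E. simpl in E. lia.
Qed.

End Trajectories.

Section OrbitPotential.
Context {D : Type}.
Variable f : D -> D.
Hypothesis period_exists : forall d, exists n, is_period f d n.

Lemma same_vertex_refl d : same_vertex f d d.
Proof. now exists 0%nat. Qed.

Lemma same_vertex_step d : same_vertex f d (f d).
Proof. now exists 1%nat. Qed.

Lemma same_vertex_trans a b c : same_vertex f a b -> same_vertex f b c -> same_vertex f a c.
Proof. intros [n Hn] [m Hm]. exists (m + n)%nat. now rewrite Nat.iter_add, Hn. Qed.

Lemma same_vertex_sym a b : same_vertex f a b -> same_vertex f b a.
Proof.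
  intros [n Hn]. destruct (period_exists a) as [p [Hp [Hpa _]]].
  exists (n * p - n)%nat. rewrite <- Hn, <- Nat.iter_add.
  replace (n * p - n + n)%nat with (n * p)%nat by nia.
  now apply iter_mul.
Qed.

Variable inc : D -> R.
Hypothesis period_sum : forall d n, is_period f d n -> cong4PI (sumR inc (traj f d n)) 0.

Lemma return_sum_cong0 x j : Nat.iter j f x = x -> cong4PI (sumR inc (traj f x j)) 0.
Proof.
  revert x; induction j as [j IH] using lt_wf_ind; intros x Hj.
  destruct j as [|j]; [apply cong4PI_refl|].
  destruct (period_exists x) as [p Hp]. pose proof Hp as [Hp0 [Hpx Hmin]].
  assert (Hpj : (p <= S j)%nat).
  { destruct (Nat.le_gt_cases p (S j)) as [|Hlt]; [assumption|].
    exfalso. exact (Hmin (S j) ltac:(lia) Hlt Hj). }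
  assert (Hrest : Nat.iter (S j - p) f x = x).
  { rewrite <- Hpx at 1. rewrite <- Nat.iter_add.
    now replace (S j - p + p)%nat with (S j) by lia. }
  replace (S j) with (p + (S j - p))%nat by lia.
  rewrite traj_add, sumR_app, Hpx. rewrite <- (Rplus_0_r 0).
  apply cong4PI_add; [now apply period_sum | apply IH; [lia | exact Hrest]].
Qed.

Lemma orbit_sum_le_cong r n m : (n <= m)%nat -> Nat.iter n f r = Nat.iter m f r ->
  cong4PI (sumR inc (traj f r m)) (sumR inc (traj f r n)).
Proof.
  intros Hnm E. replace m with (n + (m - n))%nat by lia.
  rewrite traj_add, sumR_app. rewrite <- (Rplus_0_r (sumR inc (traj f r n))) at 2.
  apply cong4PI_add; [apply cong4PI_refl | apply return_sum_cong0].
  rewrite <- Nat.iter_add. now replace (m - n + n)%nat with m by lia.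
Qed.

Lemma orbit_sum_cong r n m : Nat.iter n f r = Nat.iter m f r ->
  cong4PI (sumR inc (traj f r n)) (sumR inc (traj f r m)).
Proof.
  intros E. destruct (Nat.le_ge_cases n m).
  - now apply cong4PI_sym, orbit_sum_le_cong.
  - now apply orbit_sum_le_cong.
Qed.

Definition orbit_base (a : D) : D := epsilon (inhabits a) (fun r => same_vertex f r a).

Lemma orbit_base_spec a : same_vertex f (orbit_base a) a.
Proof.
  apply (epsilon_spec (inhabits a) (fun r => same_vertex f r a)).
  exists a. apply same_vertex_refl.
Qed.

Lemma orbit_base_step a : orbit_base (f a) = orbit_base a.
Proof.
  unfold orbit_base.
  replace (fun r => same_vertex f r (f a)) with (fun r => same_vertex f r a).
  - now rewrite (proof_irrelevance _ (inhabits (f a)) (inhabits a)).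
  - apply functional_extensionality; intros r. apply propositional_extensionality. split.
    + intros H. eapply same_vertex_trans; [exact H | apply same_vertex_step].
    + intros H. eapply same_vertex_trans; [exact H | apply same_vertex_sym, same_vertex_step].
Qed.

(* [P a] sums [inc] from the base point of the orbit up to [a]; two ways of
   getting there differ by whole turns. *)
Lemma orbit_potential : exists P : D -> R, forall a, cong4PI (P (f a)) (P a + inc a).
Proof.
  set (P a := epsilon (inhabits 0) (fun s => exists n,
         Nat.iter n f (orbit_base a) = a /\ s = sumR inc (traj f (orbit_base a) n))).
  assert (P_spec : forall a, exists n,
      Nat.iter n f (orbit_base a) = a /\ P a = sumR inc (traj f (orbit_base a) n)).
  { intros a. apply (epsilon_spec (inhabits 0) (fun s => exists n,
         Nat.iter n f (orbit_base a) = a /\ s = sumR inc (traj f (orbit_base a) n))).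
    destruct (orbit_base_spec a) as [n Hn]. eauto. }
  exists P. intros a.
  destruct (P_spec a) as [n [Hn ->]], (P_spec (f a)) as [m [Hm ->]].
  rewrite orbit_base_step in Hm |- *.
  eapply cong4PI_trans; [apply (orbit_sum_cong _ m (S n)) |].
  - now rewrite Hm, Nat.iter_succ, Hn.
  - rewrite traj_snoc, sumR_app, Hn. simpl. apply cong4PI_eq. ring.
Qed.

End OrbitPotential.

Section CoCount.
Context {A E : Type} (o : FV E -> FV E -> bool).

Lemma co_path_app l1 b l2 :
  co_path o (l1 ++ b :: l2) = (co_path o (l1 ++ [b]) + co_path o (b :: l2))%nat.
Proof.
  induction l1 as [|a l1 IH]; [simpl; lia|].
  destruct l1 as [|a' l1]; simpl in *; [lia | rewrite IH; lia].
Qed.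

Lemma co_path_rev l : co_path o (rev l) = co_path (fun a b => o b a) l.
Proof.
  induction l as [|a [|b t] IH]; [reflexivity | reflexivity |].
  change (rev (a :: b :: t)) with ((rev t ++ [b]) ++ [a]).
  rewrite <- app_assoc. change ([b] ++ [a]) with [b; a].
  rewrite co_path_app. simpl in IH |- *. rewrite IH. lia.
Qed.

Lemma co_cycle_rev l : co_cycle o (rev l) = co_cycle (fun a b => o b a) l.
Proof.
  destruct l as [|a t]; [reflexivity|]. unfold co_cycle at 2.
  rewrite <- co_path_rev. simpl rev. rewrite rev_app_distr. simpl.
  destruct (rev t ++ [a]) as [|m1 m] eqn:Em; [now destruct (rev t)|].
  unfold co_cycle. rewrite <- Em, <- app_assoc. change ([a] ++ [m1]) with [a; m1].
  rewrite co_path_app. simpl. lia.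
Qed.

Lemma co_path_flat_map_traj (f : A -> A) (phi : A -> FV E) (rho : A -> list (FV E)) x n :
  co_path o (flat_map (fun y => phi y :: rho y) (traj f x n) ++ [phi (Nat.iter n f x)]) =
  sumN (fun y => co_path o (phi y :: rho y ++ [phi (f y)])) (traj f x n).
Proof.
  revert x; induction n as [|n IH]; intros x; [reflexivity|].
  assert (Hhead : exists t, flat_map (fun y => phi y :: rho y) (traj f (f x) n)
                              ++ [phi (Nat.iter n f (f x))] = phi (f x) :: t).
  { destruct n; simpl; eauto. }
  destruct Hhead as [t Ht].
  change (traj f x (S n)) with (x :: traj f (f x) n).
  rewrite Nat.iter_succ_r. cbn [flat_map sumN]. rewrite <- app_assoc, Ht.
  change (phi x :: rho x ++ phi (f x) :: t) with ((phi x :: rho x) ++ phi (f x) :: t).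
  rewrite co_path_app, <- Ht, IH. reflexivity.
Qed.

Lemma co_cycle_flat_map_traj (f : A -> A) (phi : A -> FV E) (rho : A -> list (FV E)) x n :
  Nat.iter n f x = x ->
  co_cycle o (flat_map (fun y => phi y :: rho y) (traj f x n)) =
  sumN (fun y => co_path o (phi y :: rho y ++ [phi (f y)])) (traj f x n).
Proof.
  intros Hn. rewrite <- co_path_flat_map_traj, Hn.
  destruct n; reflexivity.
Qed.

End CoCount.

Lemma flat_map_singleton {A B : Type} (phi : A -> B) l :
  flat_map (fun y => [phi y]) l = map phi l.
Proof. induction l; simpl; [reflexivity | now rewrite IHl]. Qed.

Section Homotopy.
Context {D : Type}.
Variables (sig iota : D -> D) (g : D -> R).
Hypothesis g_iota : forall d, g (iota d) = - g d.
Hypothesis g_face : forall e k, is_period (face_next sig iota) e k ->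
  cong4PI (sumR g (traj (face_next sig iota) e k)) 0.

Lemma hstep_sum_cong l l' : hstep sig iota l l' -> cong4PI (sumR g l) (sumR g l').
Proof.
  intros [l1 l2 d | l1 l2 e k Hp]; rewrite !sumR_app.
  - simpl. rewrite g_iota. apply cong4PI_eq. ring.
  - destruct (g_face e k Hp) as [z Hz]. exists z. lra.
Qed.

Lemma homotopic_sum_cong l l' : homotopic sig iota l l' -> cong4PI (sumR g l) (sumR g l').
Proof.
  induction 1.
  - now apply hstep_sum_cong.
  - apply cong4PI_refl.
  - now apply cong4PI_sym.
  - eapply cong4PI_trans; eauto.
Qed.

End Homotopy.

Section Chains.
Context {D : Type}.
Variables (sig iota : D -> D).
Hypothesis iota_invol : forall d, iota (iota d) = d.
Hypothesis sig_period : forall d, exists n, is_period sig d n.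

(* A walk from the vertex of [a] to the vertex of [b] leaving each vertex
   through the successive darts of [L]. *)
Fixpoint dart_chain (a : D) (L : list D) (b : D) : Prop :=
  match L with
  | [] => same_vertex sig a b
  | d :: t => same_vertex sig a d /\ dart_chain (iota d) t b
  end.

Lemma dart_chain_same_vertex a a' L b :
  same_vertex sig a a' -> dart_chain a' L b -> dart_chain a L b.
Proof.
  destruct L; simpl; intros H1 H2.
  - eapply same_vertex_trans; eauto.
  - destruct H2; split; auto. eapply same_vertex_trans; eauto.
Qed.

Lemma dart_chain_app a L1 m L2 b :
  dart_chain a L1 m -> dart_chain m L2 b -> dart_chain a (L1 ++ L2) b.
Proof.
  revert a; induction L1 as [|d L1 IH]; intros a H1 H2; simpl in *.
  - eapply dart_chain_same_vertex; eauto.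
  - destruct H1; split; auto.
Qed.

Lemma dart_chain_rev a L b : dart_chain a L b -> dart_chain b (rev (map iota L)) a.
Proof.
  revert a; induction L as [|d L IH]; intros a H; simpl in *.
  - now apply (same_vertex_sym _ sig_period).
  - destruct H as [H1 H2]. eapply dart_chain_app; [exact (IH _ H2)|].
    simpl. rewrite iota_invol.
    split; [apply same_vertex_refl | now apply (same_vertex_sym _ sig_period)].
Qed.

Lemma dart_chain_walk a d L b : dart_chain a (d :: L) b ->
  walk_chain sig iota (d :: L) /\ same_vertex sig a d /\
  forall x, same_vertex sig (iota (last (d :: L) x)) b.
Proof.
  revert a d; induction L as [|e L IH]; intros a d [Had Hrest].
  - repeat split; auto.
  - destruct (IH _ _ Hrest) as [Hw [Hde Hlast]].
    repeat split; auto.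
Qed.

Lemma dart_chain_loop_sum (g : D -> R) a L :
  plane_map sig iota ->
  (forall d, g (iota d) = - g d) ->
  (forall e k, is_period (face_next sig iota) e k ->
     cong4PI (sumR g (traj (face_next sig iota) e k)) 0) ->
  dart_chain a L a -> cong4PI (sumR g L) 0.
Proof.
  intros Hpm g_iota g_face HL. destruct L as [|d L]; [apply cong4PI_refl|].
  destruct (dart_chain_walk _ _ _ _ HL) as [Hw [Had Hlast]].
  assert (Hclosed : closed_walk sig iota (d :: L)).
  { split; [exact Hw|]. eapply same_vertex_trans; [apply Hlast | exact Had]. }
  destruct Hpm as (_ & _ & _ & _ & _ & _ & Hplanar).
  apply (homotopic_sum_cong _ _ _ g_iota g_face _ _ (Hplanar _ Hclosed)).
Qed.

End Chains.

Section FisherAngles.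
Context {D : Type}.
Variables (sig iota : D -> D) (th : D -> R) (o : FV D -> FV D -> bool).
Hypothesis iota_invol : forall d, iota (iota d) = d.
Hypothesis Hiso : isoradial_angles sig iota th.
Hypothesis Hadm : admissible sig iota o.

Lemma orientation_flip a b : fisher_edge0 sig iota a b -> o b a = negb (o a b).
Proof.
  intros H. destruct Hadm as [[_ Hanti] _].
  specialize (Hanti a b (or_introl H)). now destruct (o a b), (o b a).
Qed.

Lemma incR2_flip e :
  incR2 sig th o e = 2 * th e + 2 * PI * INR (Nat.b2n (o (W (sig e)) (W e))).
Proof.
  unfold incR2. rewrite (orientation_flip (W e) (W (sig e))) by (exists e; now left).
  destruct (o (W e) (W (sig e))); simpl; ring.
Qed.

Lemma inner_face_count d n : is_period sig d n ->
  co_cycle o (inner_face_cw sig d n) =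
  sumN (fun e => Nat.b2n (o (W (sig e)) (W e))) (traj sig d n).
Proof.
  intros (_ & Hn & _). unfold inner_face_cw.
  rewrite co_cycle_rev, <- flat_map_singleton.
  rewrite (co_cycle_flat_map_traj _ sig W (fun _ => []) d n Hn).
  apply sumN_ext. intros e. apply Nat.add_0_r.
Qed.

Lemma vertex_turn d n : is_period sig d n ->
  cong4PI (sumR (incR2 sig th o) (traj sig d n)) 0.
Proof.
  intros Hp. destruct Hiso as (_ & _ & Hvertex & _). destruct Hadm as (_ & Hinner & _).
  pose proof (Hinner d n Hp) as Hodd. rewrite inner_face_count in Hodd by exact Hp.
  destruct (proj1 (Nat.odd_spec _) Hodd) as [m Hm].
  rewrite (sumR_ext _ _ _ incR2_flip), sumR_plus, (Hvertex d n Hp), sumR_scal, sumR_INR, Hm.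
  exists (Z.of_nat (m + 1)).
  rewrite <- INR_IZR_INZ, !plus_INR, mult_INR. simpl. lra.
Qed.

Lemma incR3_iota d : incR3 iota o (iota d) = - incR3 iota o d.
Proof.
  unfold incR3. rewrite iota_invol. simpl co_path.
  rewrite (orientation_flip (V (iota d)) (W (iota d))) by (exists (iota d); auto).
  rewrite (orientation_flip (V d) (V (iota d))) by (exists d; auto 6).
  rewrite (orientation_flip (V d) (W d)) by (exists d; auto).
  destruct (o (V (iota d)) (W (iota d))), (o (V d) (V (iota d))), (o (V d) (W d));
    simpl; ring.
Qed.

(* The number of 2 PI corrections in the steps (R3) at [iota c] and (R2) at [c],
   which together cross the corner of a face of G between [c] and [sig c]. *)
Definition corner_count (c : D) : nat :=
  (Nat.b2n (Nat.odd (co_path o [W (iota c); V (iota c); V c; W c])) +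
   Nat.b2n (o (W c) (W (sig c))))%nat.

Lemma corner_increment c : incR3 iota o (iota c) + incR2 sig th o c =
  3 * PI + 2 * th c - 2 * PI * INR (corner_count c).
Proof.
  unfold incR3, incR2, corner_count. rewrite iota_invol.
  destruct (Nat.odd _), (o (W c) (W (sig c))); simpl; ring.
Qed.

Lemma corner_count_parity c :
  Nat.even (corner_count c + Nat.b2n (o (V c) (W (sig c))) +
            (Nat.b2n (o (W (iota c)) (V (iota c))) + Nat.b2n (o (V (iota c)) (V c)))) = true.
Proof.
  destruct Hadm as (_ & _ & Htriangle & _). specialize (Htriangle c).
  unfold co_cycle, triangle_cw in Htriangle. simpl in Htriangle.
  rewrite (orientation_flip (V c) (W (sig c))) in Htriangle by (exists c; auto).
  unfold corner_count. simpl co_path.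
  destruct (o (W (iota c)) (V (iota c))), (o (V (iota c)) (V c)), (o (V c) (W c)),
    (o (W c) (W (sig c))), (o (V c) (W (sig c))); simpl in *; auto.
Qed.

Lemma corner_count_odd c k : is_period (corner_next sig iota) c k ->
  exists m, sumN corner_count (traj (corner_next sig iota) c k) = (2 * m + 1)%nat.
Proof.
  intros Hp. destruct Hadm as (_ & _ & _ & Hbig). specialize (Hbig c k Hp).
  destruct Hp as (_ & Hk & _).
  set (l := traj (corner_next sig iota) c k) in *.
  set (cross x := (Nat.b2n (o (W x) (V x)) + Nat.b2n (o (V x) (V (iota x))))%nat).
  unfold big_face_cw in Hbig.
  rewrite (co_cycle_flat_map_traj _ _ V (fun x => [W (sig x); V (sig x)]) c k Hk) in Hbig.
  fold l in Hbig.
  assert (Hface : sumN (fun x => co_path o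
                    (V x :: [W (sig x); V (sig x)] ++ [V (corner_next sig iota x)])) l =
    (sumN (fun x => Nat.b2n (o (V x) (W (sig x)))) l + sumN (fun x => cross (sig x)) l)%nat).
  { rewrite <- sumN_plus. apply sumN_ext. intros x.
    unfold cross, corner_next, Nat.b2n. simpl. lia. }
  assert (Hshift : sumN (fun x => cross (sig x)) l =
                   sumN (fun x => (Nat.b2n (o (W (iota x)) (V (iota x))) +
                                   Nat.b2n (o (V (iota x)) (V x)))%nat) l).
  { symmetry. unfold l. rewrite <- (sumN_traj_shift _ _ c k Hk). apply sumN_ext. intros x.
    unfold cross, corner_next. now rewrite iota_invol. }
  destruct (sumN_even _ l corner_count_parity) as [M HM].
  rewrite !sumN_plus in HM. rewrite sumN_plus in Hshift.
  destruct (proj1 (Nat.odd_spec _) Hbig) as [j Hj].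
  exists (M - j - 1)%nat. lia.
Qed.

Lemma corner_turn c k : is_period (corner_next sig iota) c k ->
  cong4PI (sumR (fun x => incR3 iota o (iota x) + incR2 sig th o x)
                (traj (corner_next sig iota) c k)) 0.
Proof.
  intros Hp. destruct (corner_count_odd c k Hp) as [m Hm].
  destruct Hiso as (_ & Hth_iota & _ & Hface). specialize (Hface c k Hp).
  destruct Hp as (_ & Hk & _).
  assert (Hth : sumR (fun x => th (sig x)) (traj (corner_next sig iota) c k) =
                sumR th (traj (corner_next sig iota) c k)).
  { rewrite <- (sumR_traj_shift _ th c k Hk). apply sumR_ext. intros x.
    unfold corner_next. now rewrite Hth_iota. }
  rewrite sumR_minus, sumR_const, sumR_scal, Hth, traj_length in Hface.
  rewrite (sumR_ext _ _ _ corner_increment), sumR_minus, sumR_plus, sumR_const,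
    !sumR_scal, sumR_INR, Hm, traj_length.
  exists (Z.of_nat k - Z.of_nat m - 1)%Z.
  rewrite !minus_IZR, <- !INR_IZR_INZ, plus_INR, mult_INR. simpl. lra.
Qed.

End FisherAngles.

Section RuleWalks.
Context {D : Type}.
Variables (sig iota : D -> D) (th : D -> R) (o : FV D -> FV D -> bool).
Hypothesis Hpm : plane_map sig iota.
Hypothesis Hiso : isoradial_angles sig iota th.
Hypothesis Hadm : admissible sig iota o.
Variable P : D -> R.
Hypothesis P_step : forall a, cong4PI (P (sig a)) (P a + incR2 sig th o a).

Let iota_invol : forall d, iota (iota d) = d := proj1 Hpm.
Let sig_period : forall d, exists n, is_period sig d n := proj1 (proj2 (proj2 Hpm)).

(* Once [P] absorbs rule (R2), a rule walk only records, up to [4 PI], the sum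
   of this quantity over the darts where (R3) was applied. *)
Definition gauged_incR3 (d : D) : R := incR3 iota o d + P d - P (iota d).

Lemma gauged_incR3_iota d : gauged_incR3 (iota d) = - gauged_incR3 d.
Proof.
  unfold gauged_incR3. rewrite (incR3_iota sig _ _ iota_invol Hadm), iota_invol. ring.
Qed.

Lemma gauged_incR3_face e k : is_period (face_next sig iota) e k ->
  cong4PI (sumR gauged_incR3 (traj (face_next sig iota) e k)) 0.
Proof.
  intros Hp.
  assert (Hconj : forall x, iota (corner_next sig iota x) = face_next sig iota (iota x)).
  { intros x. unfold corner_next, face_next. now rewrite !iota_invol. }
  assert (Hp' : is_period (corner_next sig iota) (iota e) k).
  { apply (is_period_conj (face_next sig iota) _ iota); [| | exact Hp].
    - reflexivity.
    - intros x y E. now rewrite <- (iota_invol x), E, iota_invol. }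
  pose proof Hp' as (_ & Hk & _).
  replace (traj (face_next sig iota) e k) with (map iota (traj (corner_next sig iota) (iota e) k))
    by (now rewrite (map_traj_conj _ _ _ Hconj), iota_invol).
  rewrite sumR_map. set (l := traj (corner_next sig iota) (iota e) k).
  assert (HP_shift : sumR (fun x => P (iota x)) l = sumR (fun x => P (sig x)) l).
  { unfold l. rewrite <- (sumR_traj_shift _ (fun x => P (iota x)) _ k Hk).
    apply sumR_ext. intros x. unfold corner_next. now rewrite iota_invol. }
  assert (Hsum : sumR (fun x => gauged_incR3 (iota x)) l =
                 sumR (fun x => incR3 iota o (iota x) + P (sig x) - P x) l).
  { unfold gauged_incR3. rewrite (sumR_ext _ (fun x => incR3 iota o (iota x) + P (iota x) - P x))
      by (intros x; now rewrite iota_invol).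
    rewrite !sumR_minus, !sumR_plus, HP_shift. reflexivity. }
  rewrite Hsum. eapply cong4PI_trans; [| exact (corner_turn _ _ _ _ iota_invol Hiso Hadm _ _ Hp')].
  apply sumR_cong4PI. intros x. destruct (P_step x) as [z Hz]. exists z. lra.
Qed.

Lemma rule_walk_chain d e s : rule_walk sig iota th o d e s ->
  exists L, dart_chain sig iota d L e /\ cong4PI s (P e - P d + sumR gauged_incR3 L).
Proof.
  induction 1 as [d | d e s _ [L [HL Hs]] | d e s _ [L [HL Hs]] | d e s _ [L [HL Hs]]].
  - exists []. split; [apply same_vertex_refl | apply cong4PI_eq; simpl; ring].
  - exists L. split; [eapply dart_chain_same_vertex; [apply same_vertex_step | exact HL]|].
    destruct Hs as [z Hz], (P_step d) as [z' Hz']. exists (z - z')%Z.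
    rewrite minus_IZR. lra.
  - exists L. split.
    + eapply dart_chain_same_vertex; [| exact HL].
      apply (same_vertex_sym _ sig_period), same_vertex_step.
    + destruct Hs as [z Hz], (P_step d) as [z' Hz']. exists (z + z')%Z.
      rewrite plus_IZR. lra.
  - exists (d :: L). split; [split; [apply same_vertex_refl | exact HL]|].
    destruct Hs as [z Hz]. exists z. cbn [sumR].
    change (gauged_incR3 d) with (incR3 iota o d + P d - P (iota d)). lra.
Qed.

Lemma rule_walk_cong d0 d s1 s2 :
  rule_walk sig iota th o d0 d s1 -> rule_walk sig iota th o d0 d s2 -> cong4PI s1 s2.
Proof.
  intros H1 H2.
  destruct (rule_walk_chain _ _ _ H1) as [L1 [HL1 Hs1]],
           (rule_walk_chain _ _ _ H2) as [L2 [HL2 Hs2]].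
  assert (Hloop : cong4PI (sumR gauged_incR3 (L1 ++ rev (map iota L2))) 0).
  { apply (dart_chain_loop_sum sig iota gauged_incR3 d0); auto.
    - exact gauged_incR3_iota.
    - exact gauged_incR3_face.
    - eapply dart_chain_app; [exact HL1|].
      exact (dart_chain_rev _ _ iota_invol sig_period _ _ _ HL2). }
  rewrite sumR_app, sumR_rev, sumR_map,
    (sumR_ext (fun x => gauged_incR3 (iota x)) (fun x => -1 * gauged_incR3 x)), sumR_scal in Hloop
    by (intros x; rewrite gauged_incR3_iota; ring).
  destruct Hs1 as [a Ha], Hs2 as [b Hb], Hloop as [c Hc].
  exists (a - b + c)%Z. rewrite plus_IZR, minus_IZR. lra.
Qed.

End RuleWalks.

Theorem mainTheorem1 (D : Type) (sig iota : D -> D) (th : D -> R)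
  (o : FV D -> FV D -> bool) :
  plane_map sig iota ->
  isoradial_angles sig iota th ->
  admissible sig iota o ->
  forall (d0 d : D) (s1 s2 : R),
    rule_walk sig iota th o d0 d s1 ->
    rule_walk sig iota th o d0 d s2 ->
    exists k : Z, s1 - s2 = 4 * PI * IZR k.
Proof.
  intros Hpm Hiso Hadm d0 d s1 s2 H1 H2.
  pose proof Hpm as (_ & _ & sig_period & _).
  destruct (orbit_potential sig sig_period (incR2 sig th o)) as [P P_step].
  { intros x n Hp. exact (vertex_turn sig iota th o Hiso Hadm x n Hp). }
  exact (rule_walk_cong sig iota th o Hpm Hiso Hadm P P_step d0 d s1 s2 H1 H2).
Qed.
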